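(* For every $\eta\in(0,1]$ and $b\in\mathbb{N}$ there exists $a_0$ such that for every integer $a\ge a_0$ there exists $\nu_0>0$ such that for every $\nu\in(0,\nu_0]$ there exists $\mu_0>0$ such that for every $\mu\in(0,\mu_0]$ there exists $n_0$ such that for all $n\ge n_0$ the following holds. Let $m\in\mathbb{N}$ and let $C_1,\dots,C_m$ be finite multisets of elements of $\mathbb{N}$ such that (S1) $\nu n\le |C_i|\le n$ for every $i\in[m]$; (S2) $\sum_{i=1}^m \mathrm{mult}(t,C_i)\le \mu n$ for every $t\in\mathbb{N}$. Let $\ell\in\mathbb{N}$ and let $U_1,\dots,U_\ell\subseteq\mathbb{N}$ be pairwise disjoint sets with $|U_k|=a$ for all $k$, and $U=\bigcup_{k=1}^\ell U_k$. Then there exists $T\subseteq U$ such that (T1) $|T\cap U_k|\ge b$ for every $k\in[\ell]$; (T2) $|C_i\setminus^+ T|\ge (1-\eta)|C_i|$ for every $i\in[m]$.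
   Context: For a multiset $C$ and $t\in\mathbb{N}$, $\mathrm{mult}(t,C)$ is the multiplicity of $t$ in $C$; $|C|$ is the size counted with multiplicity. For a set $T$, $C\setminus^+T$ is the multiset obtained from $C$ by removing all copies of all elements of $T$. *)

From HB Require Import structures.
From mathcomp Require Import all_boot all_order all_algebra.
Set Implicit Arguments. Unset Strict Implicit. Unset Printing Implicit Defensive.

(* Finite multisets of naturals are represented by sequences [seq nat]
   (order irrelevant). |C| is [size C]. *)

Definition mult (t : nat) (C : seq nat) : nat := count_mem t C.

Definition msetminus (C : seq nat) (T : pred nat) : seq nat :=
  [seq x <- C | ~~ T x].

From HB Require Import structures.
From mathcomp Require Import all_boot all_order all_algebra.
From mathcomp Require Import ring lra zify.
Import Order.TTheory GRing.Theory Num.Theory.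
Local Open Scope ring_scope.
Set Implicit Arguments. Unset Strict Implicit. Unset Printing Implicit Defensive.

(* Iterative rounding in the style of Beck and Fiala.  Weight t in C_i by
   w_i(t) = mult(t, C_i) / |C_i|; by (S1) and (S2) every t has total weight at most
   mu / nu over all i.  Start from the point x = b / a on U: every block sums to b and
   every load sum_t w_i(t) x_t is at most b / a <= eta / 2.  While x has fractional
   coordinates, move it along a direction supported on them that keeps the sums of the
   blocks meeting them and the loads of the heavy rows (fractional weight above
   eta / 2), until one more coordinate reaches 0 or 1.  Such a direction exists: a
   block with a fractional coordinate has at least two since its sum is an integer,
   and there are at most a quarter as many heavy rows as fractional coordinates since
   their total fractional weight is at most mu / nu times that number.  A light row
   can gain at most its fractional weight, so its load with the fractional coordinates
   rounded up to 1 stays at most eta.  The final 0/1 point is the indicator of T. *)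

Lemma underdetermined_kernel (R : fieldType) (T I : eqType) (F : seq T) (J : seq I)
    (L : I -> T -> R) : uniq F -> (size J < size F)%N ->
  exists y : T -> R, [/\ forall t, t \notin F -> y t = 0,
    exists2 t, t \in F & y t != 0 &
    forall j, j \in J -> \sum_(t <- F) L j t * y t = 0].
Proof.
move=> uF ltJF; pose F_ := tnth (in_tuple F); pose J_ := tnth (in_tuple J).
pose M : 'M[R]_(size F, size J) := \matrix_(i, j) L (J_ j) (F_ i).
have : kermx M != 0.
  by rewrite -mxrank_eq0 mxrank_ker subn_eq0 -ltnNge (leq_ltn_trans (rank_leq_col M)).
case/rowV0Pn => v /sub_kermxP vM vnz.
pose y t := if [pick i | F_ i == t] is Some i then v 0 i else 0.
have F_inj : injective F_.
  move=> i i'; rewrite /F_ !(tnth_nth (F_ i)) => /eqP.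
  by rewrite nth_uniq // => /eqP/val_inj.
have yF i : y (F_ i) = v 0 i.
  by rewrite /y; case: pickP => [i' /eqP/F_inj -> //|/(_ i)]; rewrite eqxx.
exists y; split.
- move=> t tF; rewrite /y; case: pickP => // i /eqP Fi.
  by move: tF; rewrite -Fi mem_tnth.
- have [i vi] : exists i, v 0 i != 0.
    apply/existsP; apply: contraNT vnz => /existsPn v0.
    by apply/eqP/rowP => i; rewrite mxE; apply/eqP; rewrite -[_ == _]negbK v0.
  by exists (F_ i); rewrite ?mem_tnth ?yF.
- move=> j; rewrite -[J]/(tval (in_tuple J)) => /tnthP[k ->]; rewrite big_tnth.
  transitivity ((v *m M) 0 k); last by rewrite vM mxE.
  by rewrite mxE; apply: eq_bigr => i _; rewrite yF mxE mulrC.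
Qed.

Lemma big_uniq_support (V : nmodType) (T : eqType) (s1 s2 : seq T) (g : T -> V) :
  uniq s1 -> uniq s2 -> (forall t, g t != 0 -> (t \in s1) = (t \in s2)) ->
  \sum_(t <- s1) g t = \sum_(t <- s2) g t.
Proof.
move=> u1 u2 s12; pose nz t := g t != 0.
have drop_zeros s : \sum_(t <- s) g t = \sum_(t <- [seq t <- s | nz t]) g t.
  rewrite big_filter [RHS]big_mkcond; apply: eq_bigr => t _.
  by case: ifP => // /negbT/negbNE/eqP.
rewrite drop_zeros [RHS]drop_zeros; apply: perm_big; apply: uniq_perm; rewrite ?filter_uniq // => t.
by rewrite !mem_filter; case: (boolP (nz t)) => // /s12.
Qed.

Lemma sumr_indicator (R : pzSemiRingType) (T : Type) (s : seq T) (P : pred T) :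
  \sum_(t <- s) (P t)%:R = (count P s)%:R :> R.
Proof. by elim: s => [|t s IH]; rewrite ?big_nil ?big_cons ?IH //= natrD. Qed.

Lemma sumr_const_seq (V : nmodType) (T : Type) (s : seq T) (x : V) :
  \sum_(t <- s) x = x *+ size s.
Proof. by rewrite big_const_seq count_predT iter_addr_0. Qed.

Lemma count_lt_in (T : eqType) (P Q : pred T) (s : seq T) :
  {in s, subpred Q P} -> has (predD P Q) s -> (count Q s < count P s)%N.
Proof.
move=> QP /hasP[t ts /andP[nQt Pt]].
have -> : count Q s = count (predI Q P) s.
  by apply: eq_in_count => u us /=; case: (boolP (Q u)) => // /(QP u us) ->.
rewrite -[count P s]size_filter -(count_predC Q) !count_filter -[X in (X < _)%N]addn0.
by rewrite ltn_add2l -has_count; apply/hasP; exists t => //=; rewrite nQt.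
Qed.

Lemma uniq_flatten_disjoint (T : eqType) (l : nat) (U : nat -> seq T) :
  (forall k, (k < l)%N -> uniq (U k)) ->
  (forall k k', (k < l)%N -> (k' < l)%N -> k <> k' -> forall x, x \in U k -> x \notin U k') ->
  uniq (flatten [seq U k | k <- iota 0 l]).
Proof.
elim: l => [//|l IH] uU dis.
have uniq_prefix : uniq (flatten [seq U k | k <- iota 0 l]).
  by apply: IH => [k kl|k k' kl k'l]; [apply: uU|apply: dis]; apply: ltnW.
rewrite -addn1 iotaD map_cat flatten_cat cat_uniq /= cats0 add0n uniq_prefix uU // andbT.
apply/hasPn => t tl; apply/flatten_mapP => -[k]; rewrite mem_iota add0n => /andP[_ kl] tk.
have kl' : k <> l by move=> e; rewrite e ltnn in kl.
by move: tl; rewrite (negbTE (dis k l (ltnW kl) (ltnSn l) kl' t tk)).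
Qed.

Lemma exists_seq_argmin (R : realDomainType) (T : eqType) (s : seq T) (f : T -> R) :
  s != [::] -> exists2 t0, t0 \in s & forall t, t \in s -> f t0 <= f t.
Proof.
elim: s => [//|a s IH] _; case: (eqVneq s [::]) => [->|/IH[t0 t0s t0min]].
  by exists a; rewrite ?inE // => t; rewrite inE => /eqP ->.
have [fa|ft0] := leP (f a) (f t0).
  by exists a; rewrite ?mem_head // => t; rewrite inE => /predU1P[->//|/t0min/(le_trans fa)].
exists t0; rewrite ?inE ?t0s ?orbT // => t; rewrite inE => /predU1P[->|/t0min //].
exact: ltW.
Qed.

Definition frac (R : numDomainType) (T : Type) (x : T -> R) (t : T) : bool :=
  (0 < x t) && (x t < 1).

Lemma nonfrac_bool (R : realDomainType) (T : Type) (x : T -> R) (t : T) :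
  0 <= x t <= 1 -> ~~ frac x t -> x t = (x t == 1)%:R.
Proof.
case/andP=> x0 x1; rewrite /frac negb_and -!leNgt => /orP[xle0|xge1].
  have -> : x t = 0 by apply/le_anti; rewrite xle0 x0.
  by rewrite eq_sym oner_eq0.
have -> : x t = 1 by apply/le_anti; rewrite xge1 x1.
by rewrite eqxx.
Qed.

Lemma natrB_not_frac (R : numDomainType) (p q : nat) : ~~ (0 < (p%:R - q%:R : R) < 1).
Proof.
have -> : p%:R - q%:R = (p%:Z - q%:Z)%:~R :> R by rewrite intrB.
by rewrite ltr0z ltrz1; apply/negP => /andP[]; lia.
Qed.

Lemma line_search (R : realFieldType) (T : eqType) (G : seq T) (x y : T -> R) :
  G != [::] -> (forall t, t \in G -> frac x t && (y t != 0)) ->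
  exists s, [/\ 0 <= s, forall t, t \in G -> 0 <= x t + s * y t <= 1 &
                exists2 t0, t0 \in G & ~~ frac (fun t => x t + s * y t) t0].
Proof.
(* [r t] is the step after which coordinate [t] reaches 0 or 1. *)
move=> nG Gxy; pose r t := if 0 < y t then (1 - x t) / y t else - x t / y t.
have [t0 t0G rmin] := exists_seq_argmin r nG.
have ylt0 t : t \in G -> ~~ (0 < y t) -> y t < 0.
  by case/Gxy/andP => _ yt npos; rewrite lt_neqAle yt leNgt.
have rE t : t \in G -> r t * y t = if 0 < y t then 1 - x t else - x t.
  by case/Gxy/andP => _ yt; rewrite /r; case: ifP => _; rewrite mulfVK.
have s_ge0 : 0 <= r t0.
  have /andP[/andP[x0 x1] _] := Gxy t0 t0G.
  rewrite /r; case: ifP => [ypos|/negbT/(ylt0 t0 t0G) yneg].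
    by rewrite divr_ge0 // ?subr_ge0 ltW.
  by rewrite mulr_le0 // ?oppr_le0 ?invr_le0 ltW.
exists (r t0); split => //.
- move=> t tG; have /andP[/andP[x0 x1] _] := Gxy t tG.
  have := rE t tG; case: ifP => [ypos|/negbT/(ylt0 t tG) yneg] e.
    have : r t0 * y t <= r t * y t by rewrite ler_pM2r // rmin.
    have : 0 <= r t0 * y t by rewrite mulr_ge0 // ltW.
    by rewrite e; lra.
  have : r t * y t <= r t0 * y t by rewrite ler_nM2r // rmin.
  have : r t0 * y t <= 0 by rewrite mulr_ge0_le0 // ltW.
  by rewrite e; lra.
- exists t0 => //; rewrite /frac rE //.
  by case: ifP => _; rewrite ?subrKC ?addrN ltxx ?andbF.
Qed.

Section IterativeRounding.

Variables (R : realFieldType) (T : eqType) (l : nat) (U : nat -> seq T).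
Variables (m : nat) (w : nat -> T -> R) (b : nat) (c theta delta : R).

Hypothesis uniq_block : forall k, (k < l)%N -> uniq (U k).
Hypothesis disjoint_blocks : forall k k', (k < l)%N -> (k' < l)%N -> k <> k' ->
  forall t, t \in U k -> t \notin U k'.
Hypothesis w_ge0 : forall i t, 0 <= w i t.
Hypothesis w_col_sum : forall t, \sum_(i < m) w i t <= delta.
Hypothesis theta_gt0 : 0 < theta.
Hypothesis delta_small : 4 * delta <= theta.

Let V := flatten [seq U k | k <- iota 0 l].

Let uniq_V : uniq V := uniq_flatten_disjoint uniq_block disjoint_blocks.

Lemma mem_block k t : (k < l)%N -> t \in U k -> t \in V.
Proof. by move=> kl tk; apply/flatten_mapP; exists k; rewrite // mem_iota. Qed.

Definition load (x : T -> R) i := \sum_(t <- V) w i t * x t.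
Definition frac_mass (x : T -> R) i := \sum_(t <- V) w i t * (frac x t)%:R.
Definition rounded_load (x : T -> R) i :=
  \sum_(t <- V) w i t * (if frac x t then 1 else x t).

Record feasible (x : T -> R) : Prop := Feasible {
  feasible_range : forall t, t \in V -> 0 <= x t <= 1;
  feasible_block : forall k, (k < l)%N -> \sum_(t <- U k) x t = b%:R;
  feasible_load : forall i, (i < m)%N -> load x i <= c \/ rounded_load x i <= c + theta }.

Definition active_blocks (x : T -> R) := [seq k <- iota 0 l | has (frac x) (U k)].
Definition heavy_rows (x : T -> R) := [seq i <- iota 0 m | theta < frac_mass x i].

Lemma count_frac_block_neq1 x k : feasible x -> (k < l)%N -> count (frac x) (U k) != 1%N.
Proof.
move=> [x01 xblock _] kl; apply/negP => /eqP cnt1.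
have : size [seq t <- U k | frac x t] = 1%N by rewrite size_filter.
case Ef : [seq t <- U k | frac x t] => [|t0 []] // _.
have /andP[t0frac _] : frac x t0 && (t0 \in U k) by rewrite -mem_filter Ef mem_head.
set N := count (fun t => x t == 1) [seq t <- U k | ~~ frac x t].
have int_part : \sum_(t <- U k | ~~ frac x t) x t = N%:R.
  rewrite /N -sumr_indicator big_filter [LHS]big_seq_cond [RHS]big_seq_cond.
  by apply: eq_bigr => t /andP[tk ft]; rewrite -nonfrac_bool ?x01 ?(mem_block kl).
move: (xblock k kl) (natrB_not_frac R b N).
rewrite (bigID (frac x)) /= -big_filter Ef big_seq1 int_part => <-.
by rewrite addrK => /negP.
Qed.

Lemma active_blocks_le x : feasible x -> (2 * size (active_blocks x) <= count (frac x) V)%N.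
Proof.
move=> fx; rewrite /V count_flatten sumnE !big_map (bigID (fun k => has (frac x) (U k))) /=.
apply: leq_trans (leq_addr _ _); rewrite -big_filter -[size _]count_predT -iter_addn_0.
rewrite -big_const_seq big_seq [X in (_ <= X)%N]big_seq.
apply: leq_sum => k; rewrite mem_filter mem_iota add0n => /andP[frac_k /andP[_ kl]].
by have := count_frac_block_neq1 fx kl; rewrite has_count in frac_k; lia.
Qed.

Lemma heavy_rows_le x : (4 * size (heavy_rows x) <= count (frac x) V)%N.
Proof.
set A := heavy_rows x; set N := count (frac x) V.
have mass_ge0 i : 0 <= frac_mass x i by apply: sumr_ge0 => t _; apply: mulr_ge0.
have heavy_mass : (size A)%:R * theta <= \sum_(i <- A) frac_mass x i.
  rewrite mulrC mulr_natr -sumr_const_seq big_seq [X in _ <= X]big_seq.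
  by apply: ler_sum => i; rewrite mem_filter => /andP[/ltW].
have total_mass : \sum_(i < m) frac_mass x i <= delta * N%:R.
  rewrite /frac_mass exchange_big /= /N -sumr_indicator mulr_sumr; apply: ler_sum => t _.
  by rewrite -mulr_suml; apply: ler_wpM2r; [exact: ler0n|exact: w_col_sum].
have A_mass : \sum_(i <- A) frac_mass x i <= \sum_(i < m) frac_mass x i.
  rewrite -(big_mkord xpredT) /index_iota subn0 big_filter big_mkcond.
  by apply: ler_sum => i _; case: ifP.
have slack : 0 <= (theta - 4 * delta) * N%:R by rewrite mulr_ge0 ?subr_ge0.
rewrite -(ler_nat R) -(ler_pM2r theta_gt0) natrM; nra.
Qed.

Lemma rounded_load_le x i : (forall t, t \in V -> 0 <= x t <= 1) ->
  rounded_load x i <= load x i + frac_mass x i.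
Proof.
move=> x01; rewrite /rounded_load /load /frac_mass -big_split /= big_seq.
rewrite [X in _ <= X]big_seq; apply: ler_sum => t tV.
rewrite -mulrDr ler_wpM2l //; have /andP[x0 x1] := x01 t tV.
by case: (frac x t); rewrite ?addr0 // lerDr.
Qed.

Lemma rounded_load_mono x x' i : (forall t, t \in V -> 0 <= x' t <= 1) ->
  (forall t, t \in V -> ~~ frac x t -> x' t = x t) ->
  rounded_load x' i <= rounded_load x i.
Proof.
move=> x'01 agree; rewrite /rounded_load big_seq [X in _ <= X]big_seq; apply: ler_sum => t tV.
rewrite ler_wpM2l //; case: (boolP (frac x t)) => [_|nfx].
  by case: ifP => // _; case/andP: (x'01 t tV).
by rewrite /frac agree // -/(frac x t) (negbTE nfx).
Qed.

Lemma load_constraint_shift x x' i : feasible x -> (i < m)%N ->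
  (forall t, t \in V -> 0 <= x' t <= 1) ->
  (forall t, t \in V -> ~~ frac x t -> x' t = x t) ->
  (theta < frac_mass x i -> load x' i = load x i) ->
  load x' i <= c \/ rounded_load x' i <= c + theta.
Proof.
move=> fx im x'01 agree heavy_fixed.
have mono := rounded_load_mono i x'01 agree.
case: (feasible_load fx im) => [low|]; last by right; apply: le_trans mono _.
have [heavy|light] := ltP theta (frac_mass x i); first by left; rewrite heavy_fixed.
right; apply: le_trans mono _; apply: le_trans (rounded_load_le i (feasible_range fx)) _.
exact: lerD.
Qed.

Definition frac_support (x : T -> R) := [seq t <- V | frac x t].

Lemma shift_feasible x y : feasible x ->
  (forall t, t \notin frac_support x -> y t = 0) ->
  (forall k, k \in active_blocks x -> \sum_(t <- U k) y t = 0) ->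
  (forall i, i \in heavy_rows x -> \sum_(t <- V) w i t * y t = 0) ->
  (exists2 t, t \in frac_support x & y t != 0) ->
  exists x', feasible x' /\ (count (frac x') V < count (frac x) V)%N.
Proof.
move=> fx ysupp yblock yheavy [t1 t1F yt1].
have y_frac t : y t != 0 -> frac x t && (t \in V).
  by move=> yt; rewrite -mem_filter; apply/negPn/negP => /ysupp/eqP; rewrite (negbTE yt).
pose G := [seq t <- frac_support x | y t != 0].
have memG t : (t \in G) = (y t != 0).
  by rewrite mem_filter; case: (boolP (y t != 0)) => //= /y_frac; rewrite mem_filter.
have nG : G != [::] by apply/eqP => G0; have := memG t1; rewrite G0 in_nil yt1.
have Gfrac t : t \in G -> frac x t && (y t != 0).
  by rewrite memG => yt; rewrite yt andbT; case/andP: (y_frac t yt).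
have [s [s_ge0 sG [t0 t0G t0_fixed]]] := line_search nG Gfrac.
pose x' t := x t + s * y t.
have x'E t : y t = 0 -> x' t = x t by move=> yt0; rewrite /x' yt0 mulr0 addr0.
have agree t : t \in V -> ~~ frac x t -> x' t = x t.
  by move=> tV nft; apply: x'E; apply: contraNeq nft => /y_frac/andP[].
have x'01 t : t \in V -> 0 <= x' t <= 1.
  move=> tV; have [yt0|ytn0] := eqVneq (y t) 0; last by apply: sG; rewrite memG.
  by rewrite x'E //; apply: (feasible_range fx).
exists x'; split; last first.
  apply: count_lt_in => [t tV frac'|].
    by apply: contraTT frac' => nft; rewrite /frac agree.
  have /andP[frac_t0 t0V] : frac x t0 && (t0 \in V) by apply: y_frac; rewrite -memG.
  by apply/hasP; exists t0 => //=; rewrite t0_fixed.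
split => // [k kl|i im].
  rewrite big_split /= -mulr_sumr (feasible_block fx kl).
  case: (boolP (k \in active_blocks x)) => [/yblock -> |inactive]; first by rewrite mulr0 addr0.
  rewrite big_seq big1 ?mulr0 ?addr0 // => t tk; apply/eqP.
  apply: contraNT inactive => /y_frac/andP[ft _].
  by rewrite mem_filter mem_iota leq0n add0n kl !andbT; apply/hasP; exists t.
apply: (load_constraint_shift fx im x'01 agree) => heavy.
rewrite /load /x' (eq_bigr _ (fun t _ => mulrDr _ _ _)) big_split /=.
rewrite (eq_bigr _ (fun t _ => mulrCA _ _ _)) -mulr_sumr yheavy ?mulr0 ?addr0 //.
by rewrite mem_filter heavy mem_iota leq0n add0n im.
Qed.

Lemma rounding_step x : feasible x -> has (frac x) V ->
  exists x', feasible x' /\ (count (frac x') V < count (frac x) V)%N.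
Proof.
move=> fx has_frac; set F := frac_support x.
pose J := [seq inl k | k <- active_blocks x] ++ [seq inr i | i <- heavy_rows x].
pose L (j : nat + nat) t : R := match j with inl k => (t \in U k)%:R | inr i => w i t end.
have sizeJ : (size J < size F)%N.
  have -> : size F = count (frac x) V by rewrite size_filter.
  rewrite size_cat !size_map.
  have := active_blocks_le fx; have := heavy_rows_le x; rewrite has_count in has_frac; lia.
have [y [ysupp [t1 t1F yt1] yJ]] := underdetermined_kernel L (filter_uniq _ uniq_V) sizeJ.
have sum_F s g : uniq s -> (forall t, g t * y t != 0 -> t \in s) ->
    \sum_(t <- F) g t * y t = \sum_(t <- s) g t * y t.
  move=> us gs; apply: big_uniq_support (filter_uniq _ uniq_V) us _ => t gyt.
  rewrite (gs t gyt); apply/negPn/negP => /ysupp yt0.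
  by move: gyt; rewrite yt0 mulr0 eqxx.
apply: (shift_feasible fx ysupp); last by exists t1.
- move=> k k_act; have kl : (k < l)%N by move: k_act; rewrite mem_filter mem_iota => /and3P[].
  have := yJ (inl k); rewrite mem_cat map_f // => /(_ isT).
  rewrite (sum_F (U k)) ?uniq_block // => [sum0|t]; last first.
    by rewrite /L; case: (t \in U k); rewrite ?mul0r ?eqxx.
  apply: etrans sum0; rewrite [LHS]big_seq [RHS]big_seq.
  by apply: eq_bigr => t tk; rewrite /L tk mul1r.
- move=> i i_heavy; rewrite -(sum_F V) ?uniq_V //; last first.
    move=> t; rewrite mulf_eq0 negb_or => /andP[_ yt].
    by apply/negPn/negP => tV; move: yt; rewrite ysupp ?eqxx // mem_filter (negbTE tV) andbF.
  by apply: (yJ (inr i)); rewrite mem_cat orbC map_f.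
Qed.

Lemma rounding x : feasible x -> exists x', feasible x' /\ forall t, t \in V -> ~~ frac x' t.
Proof.
move: {2}(count (frac x) V) (leqnn (count (frac x) V)) => N.
elim: N x => [|N IH] x le_N fx;
  (case: (boolP (has (frac x) V)) => [has_frac|/hasPn]; last by exists x).
  by move: has_frac; rewrite has_count; lia.
have [x' [fx' lt_count]] := rounding_step fx has_frac.
by apply: (IH x') => //; lia.
Qed.

Lemma feasible_const (a : nat) : (0 < a)%N -> (b <= a)%N ->
  (forall k, (k < l)%N -> size (U k) = a) ->
  (forall i, (i < m)%N -> \sum_(t <- V) w i t <= 1) ->
  b%:R / a%:R <= c -> feasible (fun=> b%:R / a%:R).
Proof.
move=> a_gt0 le_ba sizeU w_row le_c; have a0 : 0 < a%:R :> R by rewrite ltr0n.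
split => [t _|k kl|i im].
- by rewrite divr_ge0 //= ler_pdivrMr // mul1r ler_nat.
- by rewrite sumr_const_seq sizeU // -[(_ / _) *+ _]mulr_natr divfK // gt_eqF.
- left; rewrite /load -mulr_suml; apply: le_trans le_c.
  by rewrite -[X in _ <= X]mul1r ler_wpM2r ?divr_ge0 ?w_row.
Qed.

Lemma round_to_set x : feasible x -> exists S : seq T, [/\ uniq S, {subset S <= V},
  forall k, (k < l)%N -> count (fun t => t \in S) (U k) = b &
  forall i, (i < m)%N -> \sum_(t <- S) w i t <= c + theta].
Proof.
move=> fx; have [x' [fx' integral]] := rounding fx.
have x'01 t : t \in V -> x' t = (x' t == 1)%:R.
  by move=> tV; apply: nonfrac_bool (feasible_range fx' tV) (integral t tV).
exists [seq t <- V | x' t == 1]; split => [||k kl|i im].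
- exact: filter_uniq uniq_V.
- by move=> t; rewrite mem_filter => /andP[].
- apply/eqP; rewrite -(eqr_nat R) -(feasible_block fx' kl) -sumr_indicator; apply/eqP.
  rewrite [LHS]big_seq [RHS]big_seq; apply: eq_bigr => t tk.
  by rewrite mem_filter (mem_block kl tk) andbT -x'01 // (mem_block kl tk).
have load_S : \sum_(t <- [seq t <- V | x' t == 1]) w i t = load x' i.
  rewrite big_filter big_mkcond [LHS]big_seq [RHS]big_seq; apply: eq_bigr => t tV.
  by rewrite [in RHS](x'01 t tV); case: (x' t == 1); rewrite ?mulr1 ?mulr0.
have rounded_eq : rounded_load x' i = load x' i.
  rewrite [LHS]big_seq [RHS]big_seq; apply: eq_bigr => t tV.
  by rewrite (negbTE (integral t tV)).
rewrite load_S; case: (feasible_load fx' im) => [low|]; last by rewrite rounded_eq.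
by apply: le_trans low _; rewrite lerDl ltW.
Qed.

End IterativeRounding.

Lemma count_mem_sum_mult (S C : seq nat) : uniq S ->
  count (fun t => t \in S) C = (\sum_(t <- S) mult t C)%N.
Proof.
elim: S => [|s S IH]; first by rewrite big_nil count_pred0.
case/andP=> sS uS; rewrite big_cons -IH // -(count_predUI (pred1 s)).
have -> : count (predI (pred1 s) (fun t => t \in S)) C = 0%N.
  by apply/eqP; rewrite -leqn0 leqNgt -has_count; apply/hasPn => t _ /=; case: eqP => // ->.
by rewrite addn0; apply: eq_count => t; rewrite inE.
Qed.

Definition mult_weight (R : numFieldType) (C : seq nat) (t : nat) : R :=
  (mult t C)%:R / (size C)%:R.

Lemma mult_weight_ge0 (R : numFieldType) (C : seq nat) (t : nat) : 0 <= mult_weight R C t.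
Proof. exact: divr_ge0. Qed.

Lemma count_mem_mult_weight (R : numFieldType) (S C : seq nat) : uniq S ->
  (count (fun t => t \in S) C)%:R = (size C)%:R * \sum_(t <- S) mult_weight R C t.
Proof.
move=> uS; rewrite count_mem_sum_mult // natr_sum mulr_sumr; apply: eq_bigr => t _.
have [/size0nil ->|C_gt0] := posnP (size C); first by rewrite mul0r.
by rewrite /mult_weight mulrCA mulfV ?mulr1 // pnatr_eq0 -lt0n.
Qed.

Lemma sum_mult_weight_le1 (R : realFieldType) (S C : seq nat) : uniq S ->
  \sum_(t <- S) mult_weight R C t <= 1.
Proof.
move=> uS; have [/size0nil ->|C_gt0] := posnP (size C).
  by rewrite big1 ?ler01 // => t _; rewrite /mult_weight /= mul0r.
rewrite -(@ler_pM2l _ (size C)%:R) ?ltr0n // -count_mem_mult_weight // mulr1 ler_nat.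
exact: count_size.
Qed.

Lemma sum_mult_weight_col (R : realFieldType) (m n : nat) (C : nat -> seq nat)
    (nu mu : R) (t : nat) : 0 < nu -> (0 < n)%N ->
  (forall i, (i < m)%N -> nu * n%:R <= (size (C i))%:R) ->
  (\sum_(i < m) mult t (C i))%:R <= mu * n%:R ->
  \sum_(i < m) mult_weight R (C i) t <= mu / nu.
Proof.
move=> nu_gt0 n_gt0 large_C sparse_t; have nun_gt0 : 0 < nu * n%:R by rewrite mulr_gt0 ?ltr0n.
apply: le_trans (_ : \sum_(i < m) (mult t (C i))%:R / (nu * n%:R) <= _).
  apply: ler_sum => i _; rewrite ler_wpM2l // lef_pV2 ?posrE ?large_C //.
  exact: lt_le_trans nun_gt0 (large_C i (ltn_ord i)).
rewrite -mulr_suml -natr_sum ler_pdivrMr // mulrA divfK ?gt_eqF //.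
Qed.

Lemma msetminus_size_ge (R : realDomainType) (C : seq nat) (S : pred nat) (eta : R) :
  (count S C)%:R <= eta * (size C)%:R ->
  (1 - eta) * (size C)%:R <= (size (msetminus C S))%:R.
Proof.
rewrite /msetminus size_filter -[count (fun x => ~~ _) C]/(count (predC S) C).
move: (count_predC S C) => /(congr1 (fun k => k%:R : R)); rewrite natrD => <-; lra.
Qed.

Lemma large_block_size (R : archiNumFieldType) (eta : R) (b : nat) : 0 < eta ->
  exists a0 : nat, forall a, (a0 <= a)%N -> [/\ (0 < a)%N, (b <= a)%N & b%:R / a%:R <= eta / 2].
Proof.
move=> eta_gt0; have := archi_boundP (ltW (divr_gt0 (ltr0Sn R 1) eta_gt0)).
set K := Num.Def.archi_bound _ => K_large.
exists (b * K).+1 => a le_a; have a_gt0 : (0 < a)%N by apply: leq_trans le_a.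
have K_gt0 : (0 < K)%N by rewrite -(ltr0n R); apply: le_lt_trans K_large; rewrite divr_ge0 ?ltW.
split => //; first by apply: leq_trans (ltnW le_a); rewrite leq_pmulr.
have bK : b%:R * (2 / eta) <= a%:R.
  apply: le_trans (_ : (b * K)%:R <= _); last by rewrite ler_nat ltnW.
  by rewrite natrM ler_wpM2l // ltW.
rewrite ler_pdivrMr ?ltr0n // (_ : b%:R = b%:R * (2 / eta) * (eta / 2)).
  by rewrite [eta / 2 * _]mulrC ler_wpM2r // divr_ge0 // ltW.
by field; rewrite gt_eqF.
Qed.

Unset Implicit Arguments.

Theorem mainTheorem5 (R : archiRealFieldType) (eta : R) (b : nat) :
  0 < eta <= 1 ->
  exists a0 : nat, forall a : nat, (a0 <= a)%N ->
  exists nu0 : R, 0 < nu0 /\ forall nu : R, 0 < nu <= nu0 ->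
  exists mu0 : R, 0 < mu0 /\ forall mu : R, 0 < mu <= mu0 ->
  exists n0 : nat, forall n : nat, (n0 <= n)%N ->
  forall (m : nat) (C : nat -> seq nat),
    (* (S1) *)
    (forall i, (i < m)%N -> nu * n%:R <= (size (C i))%:R /\ (size (C i) <= n)%N) ->
    (* (S2) *)
    (forall t : nat, (\sum_(i < m) mult t (C i))%:R <= mu * n%:R) ->
  forall (l : nat) (U : nat -> seq nat),
    (* U_1..U_l are sets (duplicate-free) of size a, pairwise disjoint *)
    (forall k, (k < l)%N -> uniq (U k) /\ size (U k) = a) ->
    (forall k k', (k < l)%N -> (k' < l)%N -> k <> k' ->
        forall x, x \in U k -> x \notin U k') ->
  exists T : seq nat,
    (* T is a subset of U = union of the U_k *)
    (forall x, x \in T -> exists2 k, (k < l)%N & x \in U k) /\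
    (* (T1) |T ∩ U_k| >= b *)
    (forall k, (k < l)%N -> (b <= count (fun x => x \in T) (U k))%N) /\
    (* (T2) *)
    (forall i, (i < m)%N ->
       (1 - eta) * (size (C i))%:R
         <= (size (msetminus (C i) (fun x => x \in T)))%:R).
Proof.
move=> /andP[eta_gt0 _]; have [a0 large_a] := large_block_size b eta_gt0.
exists a0 => a /large_a[a_gt0 le_ba ba_small]; exists 1; split => // nu /andP[nu_gt0 _].
exists (nu * eta / 8); split => [|mu /andP[mu_gt0 mu_small]]; first by rewrite divr_gt0 ?mulr_gt0.
exists 1%N => n n_gt0 m C S1 S2 l U U_sets U_disj.
have uU k : (k < l)%N -> uniq (U k) by case/U_sets.
have uV := uniq_flatten_disjoint uU U_disj.
have w_col t := sum_mult_weight_col nu_gt0 n_gt0 (fun i im => (S1 i im).1) (S2 t).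
have delta_small : 4 * (mu / nu) <= eta / 2.
  by rewrite mulrA ler_pdivrMr //; move: mu_small; rewrite ler_pdivlMr //; lra.
have x0_feasible := feasible_const (m := m) (c := eta / 2) (eta / 2) a_gt0 le_ba
  (fun k kl => (U_sets k kl).2) (fun i _ => sum_mult_weight_le1 R (C i) uV) ba_small.
have [|T [uT T_sub T_blocks T_load]] := round_to_set uU U_disj
  (fun i => mult_weight_ge0 R (C i)) w_col _ delta_small x0_feasible.
  by rewrite divr_gt0.
exists T; split => [t /T_sub/flatten_mapP[k]|]; first by rewrite mem_iota => /andP[_ kl]; exists k.
split => [k kl|i im]; first by rewrite T_blocks.
apply: msetminus_size_ge; rewrite count_mem_mult_weight // mulrC ler_wpM2r //.
by apply: le_trans (T_load i im) _; lra.
Qed.
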